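(* Let $n\ge1$, let $\mathbf{a},\mathbf{b}\in\{0,1\}^{n-1}$ and let $x,y\in\mathbb{Q}[t]$. Then in the total complex $\mathrm{Tot}(\mathcal{L}^{\mathbb{Q}}_{T^n}(\mathbb{Q}[t];\mathbb{Q}))$, in multi-degree $\mathbf{1}_n$, \[x_{(\mathbf{a},1)}\cdot y_{(\mathbf{b},1)}\sim x_{(\mathbf{a},0)}\cdot y_{(\mathbf{b},1)}+x_{(\mathbf{a},1)}\cdot y_{(\mathbf{b},0)}.\]
   Context: The $n$-chain complex $C=\mathcal{L}^{\mathbb{Q}}_{T^n}(\mathbb{Q}[t];\mathbb{Q})$: in multi-degree $\mathbf{V}=(v_1,\dots,v_n)\in\mathbb{N}^n$, $C_{\mathbf{V}}=\mathbb{Q}\otimes\bigotimes_{\mathbf{0}\neq\mathbf{v}\le\mathbf{V}}\mathbb{Q}[t]$ (tensors over $\mathbb{Q}$), i.e. elements are sums of ''multi-matrices'' of size $(v_1+1)\times\cdots\times(v_n+1)$ with entries in $\mathbb{Q}[t]$ at coordinates $\mathbf{v}\ne\mathbf{0}_n$ ($\mathbf{0}\le\mathbf{v}\le\mathbf{V}$ entrywise) and an entry in $\mathbb{Q}$ at $\mathbf{0}_n$, where $\mathbb{Q}$ is a $\mathbb{Q}[t]$-module via $t\mapsto0$. In direction $i$, the slices of a multi-matrix are indexed by the $i$th coordinate $j\in\{0,\dots,v_i\}$; the face map $d_{i,j}$ for $0\le j<v_i$ multiplies slice $j$ and slice $j+1$ entrywise into one slice, and $d_{i,v_i}$ multiplies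 slice $v_i$ entrywise into slice $0$ (the Hochschild face maps in each direction). Put $\mathrm{d}_i=\sum_{j=0}^{v_i}(-1)^jd_{i,j}$; the total complex $\mathrm{Tot}(C)$ has differential $\mathrm{d}=\sum_{i=1}^n(-1)^{v_1+\cdots+v_{i-1}}\mathrm{d}_i$ in component $\mathbf{V}$. We write $\mathbf{0}_m,\mathbf{1}_m$ for the constant vectors of length $m$. For $x\in\mathbb{Q}[t]$ and a coordinate $\mathbf{v}$, $x_{\mathbf{v}}$ is the multi-matrix with $x$ at $\mathbf{v}$ (its image in $\mathbb{Q}$ if $\mathbf{v}=\mathbf{0}$) and $1$ elsewhere; $x_{\mathbf{v}}\cdot y_{\mathbf{w}}$ is their product (entrywise), i.e. $x$ at $\mathbf{v}$, $y$ at $\mathbf{w}$ if $\mathbf{v}\neq\mathbf{w}$, and $xy$ at $\mathbf{v}$ if $\mathbf{v}=\mathbf{w}$. The relation $\sim$ means the two elements differ by a boundary in $\mathrm{Tot}(C)$. *)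

From HB Require Import structures.
From mathcomp Require Import all_boot all_order all_algebra.
From mathcomp Require Import mpoly.
Set Implicit Arguments. Unset Strict Implicit. Unset Printing Implicit Defensive.
Import GRing.Theory.
Local Open Scope ring_scope.

(* Model of C = L^Q_{T^n}(Q[t];Q) in the Hochschild multi-degrees V with
   V_i <= n+1 (this covers all multi-degrees of total degree <= n+1, which is
   all that is needed for boundaries hitting total degree n).
   A coordinate is an element of the box  Box n = {ffun 'I_n -> 'I_n.+2}.
   Q[t]^{(x) N} (tensor over Q) is the polynomial ring Q[t_v]; we use one
   variable t_v per box coordinate v.  The component C_V is modelled as the
   quotient of {mpoly rat[#|Box n|]} in which the variables t_v with v not <= V
   or v = 0 are set to 0 (t_0 = 0 accounts for the factor Q = Q[t]/(t));
   [proj V] is the canonical projection onto the normal form. *)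

Definition Box (n : nat) := {ffun 'I_n -> 'I_n.+2}.

Definition Poly (n : nat) := {mpoly rat[#|{: Box n}|]}.

Definition tvar (n : nat) (v : Box n) : Poly n := 'X_(enum_rank v).

Definition subst (n : nat) (h : Box n -> Poly n) (p : Poly n) : Poly n :=
  mmap (@mpolyC _ rat) (fun k => h (enum_val k)) p.

Definition le_coord (n : nat) (v V : Box n) : bool :=
  [forall i, (v i <= V i)%N].

Definition is_zero_coord (n : nat) (v : Box n) : bool :=
  [forall i, (v i == 0 :> nat)].

Definition proj (n : nat) (V : Box n) (p : Poly n) : Poly n :=
  subst (fun v => if le_coord v V && ~~ is_zero_coord v then tvar v else 0) p.

(* the map on coordinates induced by the face d_{i,j} (source multi-degree V) *)
Definition face_coord (n : nat) (V : Box n) (i : 'I_n) (j : nat) (v : Box n)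
  : Box n :=
  [ffun k => if k == i then
               (if (j < V i)%N then
                  (if (v i <= j)%N then v k else inord (v i).-1)
                else (if (v i == V i :> nat) then inord 0 else v k))
             else v k].

Definition dec (n : nat) (V : Box n) (i : 'I_n) : Box n :=
  [ffun k => if k == i then inord (V k).-1 else V k].
Definition inc (n : nat) (W : Box n) (i : 'I_n) : Box n :=
  [ffun k => if k == i then inord (W k).+1 else W k].

Definition face (n : nat) (V : Box n) (i : 'I_n) (j : nat) (p : Poly n)
  : Poly n :=
  proj (dec V i) (subst (fun v => tvar (face_coord V i j v)) (proj V p)).

Definition dir_diff (n : nat) (V : Box n) (i : 'I_n) (p : Poly n) : Poly n :=
  \sum_(j < (V i).+1) (-1) ^+ j * face V i j p.

Definition total_deg (n : nat) (V : Box n) : nat := \sum_(i < n) (V i : nat).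

(* component in multi-degree W of the total differential d applied to the
   chain c = (c_V)_{|V| = |W|+1} of Tot(C):
   d = sum_i (-1)^(V_1 + ... + V_{i-1}) d_i *)
Definition tot_diff_at (n : nat) (c : Box n -> Poly n) (W : Box n) : Poly n :=
  \sum_(i < n)
    (-1) ^+ (\sum_(k < n | (k < i)%N) (W k : nat)) *
    dir_diff (inc W i) i (c (inc W i)).

(* p ~ q in Tot(C), where p, q lie in the component C_{W0} of total degree m:
   p - q is the boundary of a chain of total degree m+1. *)
Definition homologous (n : nat) (W0 : Box n) (p q : Poly n) : Prop :=
  exists c : Box n -> Poly n,
    forall W : Box n, total_deg W = total_deg W0 ->
      proj W (tot_diff_at c W) = proj W (if W == W0 then p - q else 0).

(* x_v : the multi-matrix with x at coordinate v and 1 elsewhere *)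
Definition at_coord (n : nat) (x : {poly rat}) (v : Box n) : Poly n :=
  (map_poly (@mpolyC _ rat) x).[tvar v].

Definition ones (n : nat) : Box n := [ffun _ => inord 1].

Definition coord_ae (n : nat) (a : (n.-1).-tuple bool) (e : bool) : Box n :=
  [ffun i : 'I_n => inord (if (i < n.-1)%N then nat_of_bool (nth false a i)
                           else nat_of_bool e)].

(* The relation is the boundary of the single chain x_{(a,1)} y_{(b,2)} placed in
   multi-degree (1_{n-1}, 2).  In each direction i < n that multi-degree has only two
   slices, so the faces d_{i,0} and d_{i,1} both multiply them and d_i vanishes; in the
   last direction the three faces send it to
   x_{(a,0)} y_{(b,1)} - x_{(a,1)} y_{(b,1)} + x_{(a,1)} y_{(b,0)}. *)

From HB Require Import structures.
From mathcomp Require Import all_boot all_order all_algebra.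
From mathcomp Require Import mpoly.
Set Implicit Arguments. Unset Strict Implicit. Unset Printing Implicit Defensive.
Import GRing.Theory.
Local Open Scope ring_scope.

Section Substitution.
Variable n : nat.
Implicit Types (g h : Box n -> Poly n) (p : Poly n) (v : Box n) (x : {poly rat}).

HB.instance Definition _ h :=
  GRing.RMorphism.copy (subst h) (mmap (@mpolyC _ rat) (fun k => h (enum_val k))).

Lemma subst_tvar h v : subst h (tvar v) = h v.
Proof. by rewrite /subst /tvar mmapX mmap1U enum_rankK. Qed.

Lemma subst_horner h x q :
  subst h (map_poly (@mpolyC _ rat) x).[q] = (map_poly (@mpolyC _ rat) x).[subst h q].
Proof.
rewrite -horner_map -map_poly_comp; congr (_.[_]).
by apply: eq_map_poly => c; apply: mmapC.
Qed.

Lemma subst_at_coord h x v :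
  subst h (at_coord x v) = (map_poly (@mpolyC _ rat) x).[h v].
Proof. by rewrite subst_horner subst_tvar. Qed.

Lemma eq_subst g h : g =1 h -> subst g =1 subst h.
Proof.
move=> eq_gh p; rewrite /subst /mmap; apply: eq_bigr => m _.
by congr (_ * _); apply: mmap1_eq => k; rewrite eq_gh.
Qed.

Lemma subst_comp g h p : subst g (subst h p) = subst (fun v => subst g (h v)) p.
Proof.
elim/mpolyind: p => [|c m p _ _ IHp]; first by rewrite !rmorph0.
rewrite !rmorphD /= IHp; congr (_ + _).
rewrite /subst !mmapZ !mmapX rmorphM /= mmapC /mmap1 rmorph_prod.
by congr (_ * _); apply: eq_bigr => k _; rewrite rmorphXn.
Qed.

End Substitution.

Section Faces.
Variable n : nat.
Implicit Types (V v : Box n) (i : 'I_n) (j : nat) (p : Poly n) (x : {poly rat}).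

HB.instance Definition _ V := GRing.RMorphism.copy (proj V)
  (subst (fun v => if le_coord v V && ~~ is_zero_coord v then tvar v else 0)).

HB.instance Definition _ V i j := GRing.RMorphism.copy (face V i j)
  (proj (dec V i) \o subst (fun v => tvar (face_coord V i j v)) \o proj V).

Lemma proj_idem V p : proj V (proj V p) = proj V p.
Proof.
rewrite {1}/proj subst_comp; apply: eq_subst => v.
by case: ifP => // supp_v; rewrite ?rmorph0 // /proj subst_tvar supp_v.
Qed.

Lemma faceE V i j : face V i j =1 subst (fun v =>
  if le_coord v V && ~~ is_zero_coord v then proj (dec V i) (tvar (face_coord V i j v)) else 0).
Proof.
move=> p; rewrite /face {1 3}/proj !subst_comp; apply: eq_subst => v.
by case: ifP => _; rewrite ?subst_tvar // !rmorph0.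
Qed.

Lemma face_at_coord V i j x v : le_coord v V && ~~ is_zero_coord v ->
  face V i j (at_coord x v) = proj (dec V i) (at_coord x (face_coord V i j v)).
Proof. by move=> supp_v; rewrite faceE subst_at_coord supp_v /proj subst_at_coord subst_tvar. Qed.

Lemma eq_face V i j j' :
  {in [pred v | le_coord v V], face_coord V i j =1 face_coord V i j'} ->
  face V i j =1 face V i j'.
Proof.
move=> eq_fc p; rewrite !faceE; apply: eq_subst => v.
by case: ifP => // /andP[supp_v _]; rewrite eq_fc.
Qed.

Lemma dir_diff2 V i p : (V i : nat) = 2%N ->
  dir_diff V i p = face V i 0 p - face V i 1 p + face V i 2 p.
Proof.
move=> Vi2; rewrite /dir_diff Vi2 !big_ord_recr big_ord0 /= add0r expr0 expr1.
by rewrite mul1r mulN1r sqrrN expr1n mul1r.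
Qed.

Lemma dir_diff_signM V i m p :
  dir_diff V i ((-1) ^+ m * p) = (-1) ^+ m * dir_diff V i p.
Proof.
rewrite /dir_diff mulr_sumr; apply: eq_bigr => j _.
by rewrite rmorphM rmorph_sign mulrCA.
Qed.

Lemma dir_diff0 V i : dir_diff V i 0 = 0.
Proof. by rewrite /dir_diff big1 // => j _; rewrite rmorph0 mulr0. Qed.

Lemma dir_diff_eq0 V i p : (V i : nat) = 1%N -> dir_diff V i p = 0.
Proof.
move=> Vi1; rewrite /dir_diff Vi1 !big_ord_recr big_ord0 /= add0r expr0 expr1.
rewrite mul1r mulN1r (eq_face (j' := 1)) ?subrr // => v /forallP/(_ i).
rewrite Vi1 => le_vi1; apply/ffunP => k; rewrite !ffunE Vi1.
by case: eqP => // ->; case: (v i) le_vi1 => [[|[|m]] ?].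
Qed.

End Faces.

(* The slice of d_{i,j} receiving slice e, when direction i has m+1 slices. *)
Definition face_index (m j e : nat) : nat :=
  if (j < m)%N then (if (e <= j)%N then e else e.-1) else (if e == m then 0%N else e).

Section MultiDegrees.
Variable n : nat.
Implicit Types (V W v : Box n) (i k : 'I_n) (j : nat).

Lemma face_coordE V i j v k :
  face_coord V i j v k = if k == i then inord (face_index (V i) j (v i)) else v k.
Proof.
rewrite ffunE /face_index; case: eqP => // ->.
by case: ifP => _; case: ifP => _; rewrite ?inord_val.
Qed.

Lemma dec_inc W i : (W i < n.+1)%N -> dec (inc W i) i = W.
Proof.
move=> lt_Wi; apply/ffunP => k; rewrite !ffunE.
by case: eqP => // ->; apply/val_inj; rewrite /= !inordK // ltnW.
Qed.

Lemma inc_dec V i : (0 < V i)%N -> inc (dec V i) i = V.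
Proof.
move=> gt0_Vi; apply/ffunP => k; rewrite !ffunE.
case: eqP => // ->; apply/val_inj.
by rewrite /= (inordK (leq_ltn_trans (leq_pred _) (ltn_ord _))) prednK ?inordK.
Qed.

Lemma inc_eq_dec W V i : inc W i = V -> (0 < V i)%N -> W = dec V i.
Proof.
move=> <-; rewrite ffunE eqxx; case: (ltnP (W i) n.+1) => [lt_Wi _|ge_Wi].
  by rewrite dec_inc.
have -> : (W i : nat) = n.+1 by apply/eqP; rewrite eqn_leq ge_Wi -ltnS ltn_ord.
by rewrite /inord /insubd insubF //= ltnn.
Qed.

Lemma tot_diff_at_single V i0 z W :
    (forall i, i != i0 -> (V i : nat) = 1%N) -> (0 < V i0)%N ->
  tot_diff_at (fun U => if U == V then z else 0) W =
  if W == dec V i0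
  then (-1) ^+ (\sum_(k < n | (k < i0)%N) (W k : nat)) * dir_diff V i0 z
  else 0.
Proof.
move=> V1 gt0_Vi0; rewrite /tot_diff_at (bigD1 i0) //= [X in _ + X]big1 => [|i ne_i].
  rewrite addr0; case: (eqVneq W (dec V i0)) => [->|ne_W].
    by rewrite (inc_dec gt0_Vi0) eqxx.
  have ne_incW : inc W i0 != V by apply: contra ne_W => /eqP/inc_eq_dec->.
  by rewrite (negbTE ne_incW) dir_diff0 mulr0.
by case: eqP => [->|_]; rewrite ?(dir_diff_eq0 _ (V1 i ne_i)) ?dir_diff0 mulr0.
Qed.

End MultiDegrees.

Section LastDirection.
Variable n : nat.
Implicit Types (V : Box n.+1) (k : 'I_n.+1) (a : n.-tuple bool) (j e : nat).

Local Notation V2 := (inc (ones n.+1) ord_max).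

Definition coord_last a e : Box n.+1 :=
  [ffun k : 'I_n.+1 => inord (if (k < n)%N then nat_of_bool (nth false a k) else e)].

Lemma ltn_ord_max k : k != ord_max -> (k < n)%N.
Proof.
move=> ne_k; rewrite ltn_neqAle -ltnS ltn_ord andbT.
by apply: contra ne_k => /eqP k_n; apply/eqP/val_inj.
Qed.

Lemma V2_neq_max k : k != ord_max -> (V2 k : nat) = 1%N.
Proof. by move=> ne_k; rewrite ffunE (negbTE ne_k) ffunE inordK. Qed.

Lemma V2_max : (V2 ord_max : nat) = 2%N.
Proof. by rewrite !ffunE eqxx !inordK. Qed.

Lemma dec_V2 : dec V2 ord_max = ones n.+1.
Proof. by rewrite dec_inc // ffunE inordK. Qed.

Lemma coord_last_supp a e : (0 < e <= 2)%N ->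
  le_coord (coord_last a e) V2 && ~~ is_zero_coord (coord_last a e).
Proof.
case/andP=> gt0_e le_e2; have lt_e : (e < n.+3)%N by apply: leq_ltn_trans le_e2 _.
apply/andP; split.
  apply/forallP => k; rewrite ffunE; case: (eqVneq k ord_max) => [->|ne_k].
    by rewrite ltnn V2_max inordK.
  by rewrite V2_neq_max // ltn_ord_max // inordK; case: nth.
by apply/negP => /forallP/(_ ord_max); rewrite ffunE ltnn inordK //; case: e gt0_e {le_e2 lt_e}.
Qed.

Lemma face_coord_last V j a e : (e < n.+3)%N ->
  face_coord V ord_max j (coord_last a e) = coord_last a (face_index (V ord_max) j e).
Proof.
move=> lt_e; apply/ffunP => k; rewrite face_coordE !ffunE.
case: (eqVneq k ord_max) => [->|ne_k]; first by rewrite ltnn inordK.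
by rewrite ltn_ord_max.
Qed.

Lemma face_V2_at_coord_last j x a e : (0 < e <= 2)%N ->
  face V2 ord_max j (at_coord x (coord_last a e)) =
  proj (ones n.+1) (at_coord x (coord_last a (face_index 2 j e))).
Proof.
move=> e_12; have lt_e : (e < n.+3)%N by apply: leq_ltn_trans (proj2 (andP e_12)) _.
by rewrite face_at_coord ?coord_last_supp // dec_V2 face_coord_last // V2_max.
Qed.

Lemma dir_diff_V2 x y a b :
  dir_diff V2 ord_max (at_coord x (coord_last a 1) * at_coord y (coord_last b 2)) =
  proj (ones n.+1)
    (at_coord x (coord_last a 0) * at_coord y (coord_last b 1)
     - at_coord x (coord_last a 1) * at_coord y (coord_last b 1)
     + at_coord x (coord_last a 1) * at_coord y (coord_last b 0)).
Proof.
rewrite dir_diff2 ?V2_max // !rmorphM /= !face_V2_at_coord_last //= -!rmorphM.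
by rewrite rmorphD rmorphB.
Qed.

End LastDirection.

Theorem lemma4p6 (n : nat) (hn : (0 < n)%N) (a b : (n.-1).-tuple bool)
    (x y : {poly rat}) :
  homologous (ones n)
    (at_coord x (coord_ae a true) * at_coord y (coord_ae b true))
    (at_coord x (coord_ae a false) * at_coord y (coord_ae b true)
     + at_coord x (coord_ae a true) * at_coord y (coord_ae b false)).
Proof.
case: n hn a b => // n _ /= a b.
pose m := (\sum_(k < n.+1 | (k < @ord_max n)%N) (ones n.+1 k : nat))%N.
pose z : Poly n.+1 := at_coord x (coord_last a 1) * at_coord y (coord_last b 2).
exists (fun W => if W == inc (ones n.+1) ord_max then (-1) ^+ m.+1 * z else 0) => W _.
rewrite (tot_diff_at_single (i0 := ord_max)) => [|i /V2_neq_max //|]; last by rewrite V2_max.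
rewrite dec_V2; case: (eqVneq W (ones n.+1)) => [->|_]; last by [].
rewrite dir_diff_signM dir_diff_V2 exprS mulN1r mulNr mulrN mulrA -expr2 sqrr_sign.
by rewrite mul1r -rmorphN proj_idem opprD opprB -addrA -opprD.
Qed.
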